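(* Let $p$ be an integer with $1\le p\le13$. There exist constants $c,C>0$ such that for every polynomial $\eta\in\mathbf P^p([-1,1])$ with $\eta(-1)=0$ there exists $\psi\in\mathbf P^{p-1}([-1,1])$ with $\psi(1)=\eta(1)$, $$J(\psi;\eta):=\int_{-1}^1\Big(\eta\psi-\frac14(\eta-\psi)^2\Big)dx\ge c\int_{-1}^1\eta^2\,dx,\qquad\int_{-1}^1\psi^2\,dx\le C\int_{-1}^1\eta^2\,dx.$$
   Context: $\mathbf P^q([-1,1])$ denotes the space of real polynomials of degree at most $q$ on $[-1,1]$. *)

From Stdlib Require Import Reals.
From Coquelicot Require Import Coquelicot.
Open Scope R_scope.

(* f is (the restriction to [-1,1] of) a real polynomial of degree at most q:
   f x = sum_{k=0}^q a_k x^k.  (sum_f_R0 g q = g 0 + ... + g q.) *)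
Definition is_poly_deg (q : nat) (f : R -> R) : Prop :=
  exists a : nat -> R, forall x, f x = sum_f_R0 (fun k => a k * x ^ k) q.

Definition sqnorm (f : R -> R) : R := RInt (fun x => (f x) ^ 2) (-1) 1.

Definition J (psi eta : R -> R) : R :=
  RInt (fun x => eta x * psi x - / 4 * (eta x - psi x) ^ 2) (-1) 1.

(* Writing eta = sum_k a_k x^k and psi = sum_j b_j x^j, both J(psi; eta) and the
   squared L^2 norms are quadratic forms in the coefficients, with Gram entries
   int_{-1}^1 x^(i+j) dx.  For each p we take b = M a / d for an explicit integer
   matrix M whose columns all sum to d, so that psi(1) = eta(1).  Then
   400 d^2 (J(psi; eta) - ||eta||^2 / 100) is a quadratic form in a which, up to a
   multiple of the linear form eta(-1) = sum_k (-1)^k a_k, is a nonnegative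
   combination of squares; this identity is checked by computation on integer
   matrices.  The bound on ||psi|| follows from J >= 0 and ||6 eta - psi||^2 >= 0. *)

From Stdlib Require Import Reals Lra Lia ZArith List FunctionalExtensionality.
From Coquelicot Require Import Coquelicot.
Import ListNotations.
Open Scope R_scope.

Definition poly_val (a : nat -> R) (n : nat) (x : R) : R :=
  sum_f_R0 (fun k => a k * x ^ k) n.

Definition moment (k : nat) : R := if Nat.even k then 2 / INR (S k) else 0.

Definition gram (a : nat -> R) (n : nat) (b : nat -> R) (m : nat) : R :=
  sum_f_R0 (fun i => sum_f_R0 (fun j => a i * b j * moment (i + j)) m) n.

Lemma pow_m1_parity (k : nat) : (-1) ^ k = if Nat.even k then 1 else -1.
Proof.
  destruct (Nat.Even_or_Odd k) as [[m ->] | [m ->]].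
  - rewrite Nat.even_even. apply pow_1_even.
  - rewrite Nat.even_odd, Nat.add_1_r. apply pow_1_odd.
Qed.

Lemma is_RInt_pow_moment (k : nat) : is_RInt (fun x => x ^ k) (-1) 1 (moment k).
Proof.
  assert (Hk : INR (S k) <> 0) by (apply not_0_INR; lia).
  set (F x := x ^ S k / INR (S k)).
  replace (moment k) with (minus (F 1) (F (-1))).
  - apply (is_RInt_derive F (fun x => x ^ k)).
    + intros x _. unfold F. auto_derive; [exact I|]. simpl Nat.pred. field. exact Hk.
    + intros x _. apply (ex_derive_continuous (fun x => x ^ k)). auto_derive. exact I.
  - unfold F, minus, plus, opp, moment; cbn -[pow INR].
    rewrite pow1, pow_m1_parity, Nat.even_succ, <- Nat.negb_even.
    destruct (Nat.even k); simpl; field; exact Hk.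
Qed.

Lemma is_RInt_scal_R (f : R -> R) (a b c I : R) :
  is_RInt f a b I -> is_RInt (fun x => c * f x) a b (c * I).
Proof. exact (is_RInt_scal f a b c I). Qed.

Lemma is_RInt_plus_R (f g : R -> R) (a b I1 I2 : R) :
  is_RInt f a b I1 -> is_RInt g a b I2 -> is_RInt (fun x => f x + g x) a b (I1 + I2).
Proof. exact (is_RInt_plus f g a b I1 I2). Qed.

Lemma is_RInt_ext_R (f g : R -> R) (a b I : R) :
  (forall x, f x = g x) -> is_RInt f a b I -> is_RInt g a b I.
Proof. intros E. apply is_RInt_ext. intros x _. apply E. Qed.

Lemma is_RInt_monomial_mul_poly (i : nat) (b : nat -> R) (m : nat) :
  is_RInt (fun x => x ^ i * poly_val b m x) (-1) 1
    (sum_f_R0 (fun j => b j * moment (i + j)) m).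
Proof.
  induction m as [|m IH]; simpl.
  - apply (is_RInt_ext_R (fun x => b 0%nat * x ^ (i + 0))).
    + intros x. unfold poly_val. rewrite Nat.add_0_r. simpl. ring.
    + apply is_RInt_scal_R, is_RInt_pow_moment.
  - apply (is_RInt_ext_R (fun x => x ^ i * poly_val b m x + b (S m) * x ^ (i + S m))).
    + intros x. unfold poly_val. rewrite tech5, pow_add. ring.
    + apply (is_RInt_plus_R _ _ _ _ _ _ IH), is_RInt_scal_R, is_RInt_pow_moment.
Qed.

Lemma is_RInt_poly_mul (a : nat -> R) (n : nat) (b : nat -> R) (m : nat) :
  is_RInt (fun x => poly_val a n x * poly_val b m x) (-1) 1 (gram a n b m).
Proof.
  assert (Hrow : forall i, is_RInt (fun x => a i * (x ^ i * poly_val b m x)) (-1) 1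
                             (sum_f_R0 (fun j => a i * b j * moment (i + j)) m)).
  { intros i. rewrite (sum_eq _ (fun j => b j * moment (i + j) * a i)) by (intros; ring).
    rewrite <- scal_sum. apply is_RInt_scal_R, is_RInt_monomial_mul_poly. }
  unfold gram. induction n as [|n IH]; simpl.
  - refine (is_RInt_ext_R _ _ _ _ _ _ (Hrow 0%nat)). intros x. unfold poly_val. simpl. ring.
  - apply (is_RInt_ext_R (fun x => poly_val a n x * poly_val b m x
                                 + a (S n) * (x ^ S n * poly_val b m x))).
    + intros x. unfold poly_val. rewrite tech5. ring.
    + exact (is_RInt_plus_R _ _ _ _ _ _ IH (Hrow (S n))).
Qed.

Lemma is_RInt_poly_quadratic (a : nat -> R) (n : nat) (b : nat -> R) (m : nat) (u v t : R) :
  is_RInt (fun x => u * poly_val a n x ^ 2 + v * (poly_val a n x * poly_val b m x)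
                    + t * poly_val b m x ^ 2) (-1) 1
    (u * gram a n a n + v * gram a n b m + t * gram b m b m).
Proof.
  apply (is_RInt_ext_R (fun x => u * (poly_val a n x * poly_val a n x)
           + v * (poly_val a n x * poly_val b m x) + t * (poly_val b m x * poly_val b m x))).
  { intros x. ring. }
  apply is_RInt_plus_R; [apply is_RInt_plus_R|]; apply is_RInt_scal_R, is_RInt_poly_mul.
Qed.

Lemma sqnorm_poly (a : nat -> R) (n : nat) : sqnorm (poly_val a n) = gram a n a n.
Proof.
  apply is_RInt_unique.
  replace (gram a n a n) with (1 * gram a n a n + 0 * gram a n a n + 0 * gram a n a n) by ring.
  refine (is_RInt_ext_R _ _ _ _ _ _ (is_RInt_poly_quadratic a n a n 1 0 0)). intros x. ring.
Qed.

Lemma J_poly (a : nat -> R) (n : nat) (b : nat -> R) (m : nat) :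
  J (poly_val b m) (poly_val a n)
  = 3 / 2 * gram a n b m - / 4 * gram a n a n - / 4 * gram b m b m.
Proof.
  apply is_RInt_unique.
  replace (3 / 2 * gram a n b m - / 4 * gram a n a n - / 4 * gram b m b m)
    with (- / 4 * gram a n a n + 3 / 2 * gram a n b m + - / 4 * gram b m b m) by ring.
  refine (is_RInt_ext_R _ _ _ _ _ _ (is_RInt_poly_quadratic a n b m _ _ _)).
  intros x. field.
Qed.

Lemma gram_square_nonneg (a : nat -> R) (n : nat) (b : nat -> R) (m : nat) (s t : R) :
  0 <= s * s * gram a n a n + 2 * s * t * gram a n b m + t * t * gram b m b m.
Proof.
  assert (Hinterval : -1 <= 1) by lra.
  apply (is_RInt_ge_0 _ _ _ _ Hinterval (is_RInt_poly_quadratic a n b m _ _ _)).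
  intros x _.
  replace (s * s * poly_val a n x ^ 2 + 2 * s * t * (poly_val a n x * poly_val b m x)
           + t * t * poly_val b m x ^ 2)
    with ((s * poly_val a n x + t * poly_val b m x) ^ 2) by ring.
  apply pow2_ge_0.
Qed.

Lemma poly_val_1 (a : nat -> R) (n : nat) : poly_val a n 1 = sum_f_R0 a n.
Proof. apply sum_eq. intros k _. rewrite pow1. ring. Qed.

Definition gram_bound (p : nat) : Prop :=
  forall a : nat -> R, sum_f_R0 (fun k => a k * (-1) ^ k) p = 0 ->
  exists b : nat -> R, sum_f_R0 b (p - 1) = sum_f_R0 a p /\
    3 / 2 * gram a p b (p - 1) - / 4 * gram a p a p - / 4 * gram b (p - 1) b (p - 1)
    >= / 100 * gram a p a p.

Lemma lemma8_of_gram_bound (p : nat) : gram_bound p ->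
  exists c C : R, 0 < c /\ 0 < C /\
    forall eta : R -> R, is_poly_deg p eta -> eta (-1) = 0 ->
      exists psi : R -> R, is_poly_deg (p - 1) psi /\ psi 1 = eta 1 /\
        J psi eta >= c * sqnorm eta /\ sqnorm psi <= C * sqnorm eta.
Proof.
  intros Hgram. exists (/ 100), 34. split; [lra|]. split; [lra|].
  intros eta [a Ha] Heta.
  replace eta with (poly_val a p) in *
    by (apply functional_extensionality; intros x; now rewrite Ha).
  destruct (Hgram a Heta) as [b [Hsum HJ]].
  exists (poly_val b (p - 1)). split; [now exists b|].
  rewrite !poly_val_1, J_poly, !sqnorm_poly. split; [exact Hsum|].
  pose proof (gram_square_nonneg a p b (p - 1) 1 0) as Hnorm.
  pose proof (gram_square_nonneg a p b (p - 1) 6 (-1)) as Hsq.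
  split; [exact HJ|lra].
Qed.

Fixpoint eval_list {A : Type} (F : nat -> A -> R) (k : nat) (l : list A) : R :=
  match l with
  | [] => 0
  | x :: l' => F k x + eval_list F (S k) l'
  end.

Fixpoint zip_pad {A : Type} (f : A -> A -> A) (l1 l2 : list A) : list A :=
  match l1, l2 with
  | [], _ => l2
  | _, [] => l1
  | x :: l1', y :: l2' => f x y :: zip_pad f l1' l2'
  end.

Fixpoint big_zip {A : Type} (f : A -> A -> A) (g : nat -> list A) (n : nat) : list A :=
  match n with
  | O => g O
  | S n' => zip_pad f (big_zip f g n') (g (S n'))
  end.

Section EvalList.
Context {A B : Type} (F : nat -> A -> R).

Lemma eval_list_zip_pad (f : A -> A -> A) :
  (forall k x y, F k (f x y) = F k x + F k y) ->
  forall k l1 l2, eval_list F k (zip_pad f l1 l2) = eval_list F k l1 + eval_list F k l2.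
Proof.
  intros Hf k l1. revert k.
  induction l1 as [|x l1 IH]; intros k [|y l2]; simpl; try ring.
  rewrite Hf, IH. ring.
Qed.

Lemma eval_list_big_zip (f : A -> A -> A) :
  (forall k x y, F k (f x y) = F k x + F k y) ->
  forall k g n, eval_list F k (big_zip f g n) = sum_f_R0 (fun i => eval_list F k (g i)) n.
Proof.
  intros Hf k g n. induction n as [|n IH]; simpl; [reflexivity|].
  rewrite (eval_list_zip_pad f Hf), IH. reflexivity.
Qed.

Lemma eval_list_map (G : nat -> B -> R) (g : A -> B) (c : R) :
  (forall k x, G k (g x) = c * F k x) ->
  forall k l, eval_list G k (map g l) = c * eval_list F k l.
Proof.
  intros Hg k l. revert k. induction l as [|x l IH]; intros k; simpl; [ring|].
  rewrite Hg, IH. ring.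
Qed.

Lemma eval_list_zero (P : A -> bool) :
  (forall k x, P x = true -> F k x = 0) ->
  forall k l, forallb P l = true -> eval_list F k l = 0.
Proof.
  intros HP k l. revert k. induction l as [|x l IH]; intros k Hl; simpl in *; [reflexivity|].
  apply andb_prop in Hl as [Hx Hl]. rewrite HP, IH by assumption. ring.
Qed.

End EvalList.

Definition lin_term (a : nat -> R) (k : nat) (z : Z) : R := IZR z * a k.

Definition lin_form (l : list Z) (a : nat -> R) : R := eval_list (lin_term a) 0 l.

Definition lin_add : list Z -> list Z -> list Z := zip_pad Z.add.

Definition lin_scale (c : Z) : list Z -> list Z := map (Z.mul c).

Definition lin_eqb (l1 l2 : list Z) : bool :=
  forallb (Z.eqb 0) (lin_add l1 (lin_scale (-1) l2)).

Definition quad_term (a : nat -> R) (k : nat) (row : list Z) : R := a k * lin_form row a.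

Definition quad_form (M : list (list Z)) (a : nat -> R) : R := eval_list (quad_term a) 0 M.

Definition quad_add : list (list Z) -> list (list Z) -> list (list Z) := zip_pad lin_add.

Definition quad_scale (c : Z) : list (list Z) -> list (list Z) := map (lin_scale c).

Definition quad_eqb (M N : list (list Z)) : bool :=
  forallb (forallb (Z.eqb 0)) (quad_add M (quad_scale (-1) N)).

Definition quad_sym (x y : list Z) : list (list Z) :=
  quad_add (map (fun c => lin_scale c y) x) (map (fun c => lin_scale c x) y).

Lemma lin_term_add (a : nat -> R) k x y :
  lin_term a k (x + y) = lin_term a k x + lin_term a k y.
Proof. unfold lin_term. rewrite plus_IZR. ring. Qed.

Lemma lin_form_add (a : nat -> R) l1 l2 :
  lin_form (lin_add l1 l2) a = lin_form l1 a + lin_form l2 a.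
Proof. apply eval_list_zip_pad, lin_term_add. Qed.

Lemma lin_form_scale (a : nat -> R) c l : lin_form (lin_scale c l) a = IZR c * lin_form l a.
Proof. apply eval_list_map. intros k x. unfold lin_term. rewrite mult_IZR. ring. Qed.

Lemma lin_form_zero (a : nat -> R) l : forallb (Z.eqb 0) l = true -> lin_form l a = 0.
Proof.
  apply eval_list_zero. intros k x Hx. apply Z.eqb_eq in Hx as <-. unfold lin_term. ring.
Qed.

Lemma lin_eqb_sound (a : nat -> R) l1 l2 :
  lin_eqb l1 l2 = true -> lin_form l1 a = lin_form l2 a.
Proof.
  intros H. apply (lin_form_zero a) in H.
  rewrite lin_form_add, lin_form_scale in H. lra.
Qed.

Lemma quad_form_add (a : nat -> R) M N :
  quad_form (quad_add M N) a = quad_form M a + quad_form N a.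
Proof.
  apply eval_list_zip_pad. intros k x y. unfold quad_term. rewrite lin_form_add. ring.
Qed.

Lemma quad_form_scale (a : nat -> R) c M : quad_form (quad_scale c M) a = IZR c * quad_form M a.
Proof.
  apply eval_list_map. intros k x. unfold quad_term. rewrite lin_form_scale. ring.
Qed.

Lemma quad_eqb_sound (a : nat -> R) M N : quad_eqb M N = true -> quad_form M a = quad_form N a.
Proof.
  intros H. apply (eval_list_zero (quad_term a)) with (k := 0%nat) in H.
  - fold (quad_form (quad_add M (quad_scale (-1) N)) a) in H.
    rewrite quad_form_add, quad_form_scale in H. lra.
  - intros k x Hx. unfold quad_term. rewrite lin_form_zero by exact Hx. ring.
Qed.

Lemma quad_form_sym (a : nat -> R) x y :
  quad_form (quad_sym x y) a = 2 * (lin_form x a * lin_form y a).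
Proof.
  assert (Houter : forall u v, quad_form (map (fun c => lin_scale c v) u) a
                               = lin_form v a * lin_form u a).
  { intros u v. apply eval_list_map. intros k c. unfold quad_term, lin_term.
    rewrite lin_form_scale. ring. }
  unfold quad_sym. rewrite quad_form_add, !Houter. ring.
Qed.

Lemma quad_form_big_zip (a : nat -> R) g n :
  quad_form (big_zip lin_add g n) a = sum_f_R0 (fun i => quad_form (g i) a) n.
Proof.
  apply eval_list_big_zip. intros k x y. unfold quad_term. rewrite lin_form_add. ring.
Qed.

Definition moment_den : Z := 27 * 25 * 7 * 11 * 13 * 17 * 19 * 23.

Definition moment_num (k : nat) : Z :=
  if Nat.even k then (2 * moment_den / Z.of_nat (S k))%Z else 0%Z.

(* [moment_den] is the lcm of the odd numbers up to 27, so [moment k * moment_den] is an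
   integer for [k <= 26]. *)
Lemma moment_den_divisible (k : nat) :
  (k <= 26)%nat -> Nat.even k = true -> (Z.of_nat (S k) | 2 * moment_den)%Z.
Proof.
  intros Hk Heven. apply Z.mod_divide; [lia|].
  assert (Hall : forallb (fun j => negb (Nat.even j)
                                   || (2 * moment_den mod Z.of_nat (S j) =? 0)%Z)%bool
                   (seq 0 27) = true) by reflexivity.
  rewrite forallb_forall in Hall. specialize (Hall k (proj2 (in_seq 27 0 k) ltac:(lia))).
  rewrite Heven in Hall. now apply Z.eqb_eq.
Qed.

Lemma moment_scaled (k : nat) : (k <= 26)%nat -> moment k * IZR moment_den = IZR (moment_num k).
Proof.
  intros Hk. unfold moment, moment_num.
  destruct (Nat.even k) eqn:Heven; [|ring].
  destruct (moment_den_divisible k Hk Heven) as [q Hq].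
  rewrite Hq, Z.div_mul by lia.
  assert (HS : INR (S k) = IZR (Z.of_nat (S k))) by apply INR_IZR_INZ.
  assert (HS0 : INR (S k) <> 0) by (apply not_0_INR; lia).
  apply (Rmult_eq_reg_r (INR (S k))); [|exact HS0].
  replace (IZR q * INR (S k)) with (IZR (2 * moment_den)) by (rewrite HS, Hq, mult_IZR; ring).
  rewrite mult_IZR. field. exact HS0.
Qed.

Definition gram_quad (xs : nat -> list Z) (n : nat) (ys : nat -> list Z) (m : nat)
  : list (list Z) :=
  big_zip lin_add (fun i => big_zip lin_add
    (fun j => quad_scale (moment_num (i + j)) (quad_sym (xs i) (ys j))) m) n.

Lemma quad_form_gram_quad (a : nat -> R) xs n ys m :
  (n + m <= 26)%nat ->
  quad_form (gram_quad xs n ys m) a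
  = 2 * IZR moment_den * gram (fun i => lin_form (xs i) a) n (fun j => lin_form (ys j) a) m.
Proof.
  intros Hnm. unfold gram_quad, gram. rewrite quad_form_big_zip, scal_sum.
  apply sum_eq. intros i Hi. rewrite quad_form_big_zip, (Rmult_comm (sum_f_R0 _ m)), scal_sum.
  apply sum_eq. intros j Hj. rewrite quad_form_scale, quad_form_sym, <- moment_scaled by lia.
  ring.
Qed.

Definition unit_lin (i : nat) : list Z := repeat 0%Z i ++ [1%Z].

Lemma lin_form_unit (a : nat -> R) : (fun i => lin_form (unit_lin i) a) = a.
Proof.
  apply functional_extensionality. intros i.
  assert (Hk : forall k, eval_list (lin_term a) k (unit_lin i) = a (k + i)%nat).
  { induction i as [|i IH]; intros k; unfold unit_lin, lin_term in *; simpl.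
    - rewrite Nat.add_0_r. ring.
    - rewrite IH, <- Nat.add_succ_comm. ring. }
  apply Hk.
Qed.

Lemma lin_form_tabulate (a : nat -> R) (f : nat -> Z) (n : nat) :
  lin_form (map f (seq 0 (S n))) a = sum_f_R0 (fun i => IZR (f i) * a i) n.
Proof.
  assert (Hk : forall k, eval_list (lin_term a) k (map f (seq k (S n)))
                         = sum_f_R0 (fun i => IZR (f (k + i)%nat) * a (k + i)%nat) n).
  { induction n as [|n IH]; intros k.
    - unfold lin_term. simpl. rewrite Nat.add_0_r. ring.
    - change (map f (seq k (S (S n)))) with (f k :: map f (seq (S k) (S n))).
      cbn [eval_list]. rewrite IH, (decomp_sum _ (S n)) by lia. simpl Nat.pred.
      unfold lin_term. rewrite Nat.add_0_r. f_equal.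
      apply sum_eq. intros i _. now rewrite Nat.add_succ_r. }
  apply Hk.
Qed.

Lemma gram_scale_l (a b : nat -> R) n m c :
  gram (fun i => c * a i) n b m = c * gram a n b m.
Proof.
  unfold gram. rewrite scal_sum. apply sum_eq. intros i _.
  rewrite (Rmult_comm (sum_f_R0 _ m)), scal_sum. apply sum_eq. intros j _. ring.
Qed.

Lemma gram_scale_r (a b : nat -> R) n m c :
  gram a n (fun j => c * b j) m = c * gram a n b m.
Proof.
  unfold gram. rewrite scal_sum. apply sum_eq. intros i _.
  rewrite (Rmult_comm (sum_f_R0 _ m)), scal_sum. apply sum_eq. intros j _. ring.
Qed.

Record certificate := Certificate {
  cert_den : Z;
  cert_scale : Z;
  cert_map : list (list Z);
  cert_squares : list (Z * list Z);
  cert_multiplier : list Z }.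

Definition cert_row (c : certificate) (j : nat) : list Z := nth j (cert_map c) [].

Definition sos_quad (cs : list (Z * list Z)) : list (list Z) :=
  fold_right (fun q M => quad_add (quad_scale (fst q) (quad_sym (snd q) (snd q))) M) [] cs.

(* 2 moment_den * 400 d^2 (J(psi; eta) - ||eta||^2 / 100), as a form in a, where psi has
   coefficients b = M a / d. *)
Definition cert_form (p : nat) (c : certificate) : list (list Z) :=
  let d := cert_den c in
  quad_add (quad_add (quad_scale (600 * d) (gram_quad unit_lin p (cert_row c) (p - 1)))
                     (quad_scale (-104 * d * d) (gram_quad unit_lin p unit_lin p)))
           (quad_scale (-100) (gram_quad (cert_row c) (p - 1) (cert_row c) (p - 1))).

Definition alternating (p : nat) : list Z :=
  map (fun k => if Nat.even k then 1%Z else (-1)%Z) (seq 0 (S p)).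

Definition ones (p : nat) : list Z := map (fun _ => 1%Z) (seq 0 (S p)).

Definition cert_check (p : nat) (c : certificate) : bool :=
  (0 <? cert_den c)%Z && (0 <? cert_scale c)%Z && (p + p <=? 26)%nat
  && forallb (fun q => 0 <=? fst q)%Z (cert_squares c)
  && lin_eqb (big_zip Z.add (cert_row c) (p - 1)) (lin_scale (cert_den c) (ones p))
  && quad_eqb (quad_scale (2 * cert_scale c) (cert_form p c))
              (quad_add (sos_quad (cert_squares c)) (quad_sym (alternating p) (cert_multiplier c))).

Lemma lin_form_alternating (a : nat -> R) (p : nat) :
  lin_form (alternating p) a = sum_f_R0 (fun k => a k * (-1) ^ k) p.
Proof.
  unfold alternating. rewrite lin_form_tabulate. apply sum_eq. intros k _.
  rewrite pow_m1_parity. destruct (Nat.even k); ring.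
Qed.

Lemma lin_form_ones (a : nat -> R) (p : nat) : lin_form (ones p) a = sum_f_R0 a p.
Proof. unfold ones. rewrite lin_form_tabulate. apply sum_eq. intros k _. ring. Qed.

Lemma quad_form_sos (a : nat -> R) (cs : list (Z * list Z)) :
  forallb (fun q => 0 <=? fst q)%Z cs = true -> 0 <= quad_form (sos_quad cs) a.
Proof.
  induction cs as [|[d l] cs IH]; intros Hcs; simpl in *; [unfold quad_form; simpl; lra|].
  apply andb_prop in Hcs as [Hd Hcs]. apply Z.leb_le, IZR_le in Hd.
  rewrite quad_form_add, quad_form_scale, quad_form_sym.
  pose proof (IH Hcs). pose proof (pow2_ge_0 (lin_form l a)). nra.
Qed.

Section CertificateSoundness.
Variables (p : nat) (c : certificate) (a : nat -> R).

Let d : R := IZR (cert_den c).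
Let rows : nat -> R := fun j => lin_form (cert_row c j) a.

Lemma cert_rows_sum :
  lin_eqb (big_zip Z.add (cert_row c) (p - 1)) (lin_scale (cert_den c) (ones p)) = true ->
  sum_f_R0 rows (p - 1) = d * sum_f_R0 a p.
Proof.
  intros H. apply (lin_eqb_sound a) in H.
  rewrite lin_form_scale, lin_form_ones in H. unfold d. rewrite <- H.
  symmetry. apply eval_list_big_zip, lin_term_add.
Qed.

Lemma cert_form_eval : (p + p <= 26)%nat ->
  quad_form (cert_form p c) a
  = 2 * IZR moment_den * (600 * d * gram a p rows (p - 1) - 104 * d * d * gram a p a p
                          - 100 * gram rows (p - 1) rows (p - 1)).
Proof.
  intros Hp. unfold cert_form.
  rewrite !quad_form_add, !quad_form_scale, !quad_form_gram_quad by lia.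
  rewrite lin_form_unit, !mult_IZR. unfold d, rows. ring.
Qed.

Lemma cert_form_nonneg :
  (0 < cert_scale c)%Z -> (p + p <= 26)%nat ->
  forallb (fun q => 0 <=? fst q)%Z (cert_squares c) = true ->
  quad_eqb (quad_scale (2 * cert_scale c) (cert_form p c))
           (quad_add (sos_quad (cert_squares c)) (quad_sym (alternating p) (cert_multiplier c)))
  = true ->
  sum_f_R0 (fun k => a k * (-1) ^ k) p = 0 ->
  0 <= 600 * d * gram a p rows (p - 1) - 104 * d * d * gram a p a p
       - 100 * gram rows (p - 1) rows (p - 1).
Proof.
  intros Hscale Hp Hsos Hid Halt.
  apply (quad_eqb_sound a) in Hid.
  rewrite quad_form_scale, quad_form_add, quad_form_sym, lin_form_alternating, Halt,
    cert_form_eval, mult_IZR in Hid by exact Hp.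
  pose proof (quad_form_sos a _ Hsos) as Hnonneg.
  assert (Hpos : 0 < IZR 2 * IZR (cert_scale c) * (2 * IZR moment_den)).
  { apply IZR_lt in Hscale. pose proof (IZR_lt 0 moment_den eq_refl). nra. }
  nra.
Qed.

End CertificateSoundness.

Lemma cert_check_sound (p : nat) (c : certificate) : cert_check p c = true -> gram_bound p.
Proof.
  intros Hc a Halt. unfold cert_check in Hc.
  apply andb_prop in Hc as [Hc Hid]. apply andb_prop in Hc as [Hc Hsum].
  apply andb_prop in Hc as [Hc Hsos]. apply andb_prop in Hc as [Hc Hp].
  apply andb_prop in Hc as [Hden Hscale].
  apply Z.ltb_lt in Hden, Hscale. apply Nat.leb_le in Hp.
  pose proof (cert_rows_sum p c a Hsum) as Hrows.
  set (d := IZR (cert_den c)) in *. set (rows := fun j => lin_form (cert_row c j) a) in *.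
  assert (Hd : 0 < d) by now apply IZR_lt.
  pose proof (cert_form_nonneg p c a Hscale Hp Hsos Hid Halt) as Hform.
  exists (fun j => / d * rows j). split.
  - rewrite (sum_eq _ (fun j => rows j * / d)) by (intros; ring).
    rewrite <- scal_sum, Hrows. field. lra.
  - rewrite gram_scale_r, gram_scale_l, gram_scale_r.
    apply Rminus_ge, Rle_ge.
    replace (3 / 2 * (/ d * gram a p rows (p - 1)) - / 4 * gram a p a p
             - / 4 * (/ d * (/ d * gram rows (p - 1) rows (p - 1))) - / 100 * gram a p a p)
      with ((600 * d * gram a p rows (p - 1) - 104 * d * d * gram a p a p
             - 100 * gram rows (p - 1) rows (p - 1)) / (400 * d * d)) by (field; lra).
    apply Rdiv_le_0_compat; [exact Hform|nra].
Qed.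

Open Scope Z_scope.

Definition certificate1 : certificate := {|
  cert_den := 1;
  cert_scale := 1;
  cert_map := [
    [1; 1]];
  cert_squares := [
    (13278487622400, [0; 1])];
  cert_multiplier :=
    [7951029886800; 15982373206800] |}.

Definition certificate2 : certificate := {|
  cert_den := 2;
  cert_scale := 131;
  cert_map := [
    [5; -1; 2];
    [-3; 3; 0]];
  cert_squares := [
    (3059559360, [0; 1240; -917]);
    (2253549042201600, [0; 1; 0])];
  cert_multiplier :=
    [7322657585443200; 5218445635603200; -1739481878534400] |}.

Definition certificate3 : certificate := {|
  cert_den := 15;
  cert_scale := 147777406;
  cert_map := [
    [50; 5; 5; 2];
    [-10; 35; -10; 23];
    [-25; -25; 20; -10]];
  cert_squares := [
    (139800589253325, [0; 59185; -41790; 59767]);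
    (2151252675, [0; 6823495; -579090; 4094097]);
    (38550303933555338496000, [0; 0; 1; 0])];
  cert_multiplier :=
    [501741295137455553180000; 442398741011204157180000; -206808801129986115060000;
     478004273486954994780000] |}.

Definition certificate4 : certificate := {|
  cert_den := 112;
  cert_scale := 23184756469;
  cert_map := [
    [357; 21; 21; 21; -15];
    [105; 441; 105; 105; 69];
    [-105; -105; 231; -105; 219];
    [-245; -245; -245; 91; -161]];
  cert_squares := [
    (2020404483533230080, [0; 45423; -33432; 45423; -39142]);
    (244177313402880, [0; 2432654; -51541; 1389297; -44178]);
    (294807519784960, [0; 0; 864171; -51541; 740718]);
    (87551465628044171195187200, [0; 0; 0; 1; 0])];
  cert_multiplier :=
    [4502162454029731771485004800; 4210193423288504030143564800; -1695366838504062418055961600;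
     4210193423288504030143564800; -2834769029328114601789946880] |}.

Definition certificate5 : certificate := {|
  cert_den := 140;
  cert_scale := 133729907636859;
  cert_map := [
    [399; -21; -21; -21; -21; -17];
    [84; 504; 84; 84; 84; -32];
    [294; 294; 714; 294; 294; 238];
    [-196; -196; -196; 224; -196; 308];
    [-441; -441; -441; -441; -21; -357]];
  cert_squares := [
    (4391499398678375765600, [0; 96525; -65670; 96525; -78804; 96565]);
    (75007153873360800, [0; 12420485; -97510; 6425013; -117012; 4181645]);
    (73370701188304000, [0; 0; 6810216; -87759; 5617188; -97510]);
    (863012111139799420800, [0; 0; 0; 23949; -796; 26610]);
    (201363782958125876111238758400, [0; 0; 0; 0; 1; 0])];
  cert_multiplier :=
    [41049457190657542579806453600000; 39365376895656207499609265760000;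
     -14805872593553404246733609760000; 39365376895656207499609265760000;
     -25976938550395593612041622432000; 39686154094704080848218253920000] |}.

Definition certificate6 : certificate := {|
  cert_den := 528;
  cert_scale := 769329480893156587369;
  cert_map := [
    [1529; -55; -55; -55; -55; -55; -15];
    [-385; 1199; -385; -385; -385; -385; -345];
    [770; 770; 2354; 770; 770; 770; -30];
    [2310; 2310; 2310; 3894; 2310; 2310; 2070];
    [-1155; -1155; -1155; -1155; 429; -1155; 1125];
    [-2541; -2541; -2541; -2541; -2541; -957; -2277]];
  cert_squares := [
    (1605392900229753598683765178957824, [0; 1430; -995; 1430; -1194; 1430; -1275]);
    (7590084117026554418107392, [0; 12017720; -10945; 7007099; -13134; 4859690; -12935]);
    (343347387952854202076160, [0; 0; 26372731; -45969; 20110266; -65670; 15435485]);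
    (1209886247282117538152448, [0; 0; 0; 7639401; -19701; 8222335; -26865]);
    (381056498140372584431616, [0; 0; 0; 0; 5126671; -32835; 6990915]);
    (4158781281021633043851277261760102400, [0; 0; 0; 0; 0; 1; 0])];
  cert_multiplier :=
    [3379999228996536444648795094543986892800; 3284302761584403476227255029579547852800;
     -1190464054606934127163958408157621657600; 3284302761584403476227255029579547852800;
     -2104556711327628241526509108697943367680; 3284302761584403476227255029579547852800;
     -2486368216944327488625104596985152512000] |}.

Definition certificate7 : certificate := {|
  cert_den := 8008;
  cert_scale := 20325034998515611619677205920748011;
  cert_map := [
    [24739; 715; 715; 715; 715; 715; 715; 675];
    [-4290; 19734; -4290; -4290; -4290; -4290; -4290; -2090];
    [-19305; -19305; 4719; -19305; -19305; -19305; -19305; -18225];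
    [25740; 25740; 25740; 49764; 25740; 25740; 25740; 6660];
    [70785; 70785; 70785; 70785; 94809; 70785; 70785; 66825];
    [-28314; -28314; -28314; -28314; -28314; -4290; -28314; 12078];
    [-61347; -61347; -61347; -61347; -61347; -61347; -37323; -57915]];
  cert_squares := [
    (5351177463126897647222155702756774622080,
     [0; 62104185; -41831790; 62104185; -50198148; 62104185; -53783730; 62101801]);
    (41108622788324367906531999633536,
     [0; 390905479965; 890419530; 218061304461; 1068503436; 143985229245; 1144825110; 104368635805]);
    (2891409498978166566408402247293440,
     [0; 0; 24574125576; 89041953; 20553968292; 127202790; 16703666980; 140100975]);
    (5693379824200676942856239020086784,
     [0; 0; 0; 7940926851; 50881116; 8000762770; 84801860; 7093558605]);
    (484258775314978227455305248500090880, [0; 0; 0; 0; 471698656; 4240093; 625741662; 6849381]);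
    (12275642192344345890357772079104686080, [0; 0; 0; 0; 0; 34806629; 770926; 56226093]);
    (6322102739225648756267293675840954312327250418073600, [0; 0; 0; 0; 0; 0; 1; 0])];
  cert_multiplier :=
    [20617872894409049794637543814715220202188584655602867200;
     20190603743141636059384460324616469394972988662325427200;
     -7157470398981292421714570264970907272206592214052582400;
     20190603743141636059384460324616469394972988662325427200;
     -12712539057659360864984993080908132767085627587983672320;
     20190603743141636059384460324616469394972988662325427200;
     -15093282768521390197815174287738372264890928462525568000;
     20214506912443309555062954505880735174397637389222067200] |}.

Definition certificate8 : certificate := {|
  cert_den := 366080;
  cert_scale := 784663446264517004051413149294994132857621;
  cert_map := [
    [1123265; 25025; 25025; 25025; 25025; 25025; 25025; 25025; 18305];
    [225225; 1323465; 225225; 225225; 225225; 225225; 225225; 225225; 218505];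
    [-675675; -675675; 422565; -675675; -675675; -675675; -675675; -675675; -440475];
    [-2477475; -2477475; -2477475; -1379235; -2477475; -2477475; -2477475; -2477475; -2403555];
    [2477475; 2477475; 2477475; 2477475; 3575715; 2477475; 2477475; 2477475; 1220835];
    [6441435; 6441435; 6441435; 6441435; 6441435; 7539675; 6441435; 6441435; 6249243];
    [-2147145; -2147145; -2147145; -2147145; -2147145; -2147145; -1048905; -2147145; -33033];
    [-4601025; -4601025; -4601025; -4601025; -4601025; -4601025; -4601025; -3502785; -4463745]];
  cert_squares := [
    (315878167515063384906733985499336148115537605427200,
     [0; 72144345; -49256480; 72144345; -59107776; 72144345; -63329760; 72144345; -65638048]);
    (52239891745603498665866958535120857124044800,
     [0; 102046054110; 387442055; 60010483533; 464930466; 41995239000; 498139785; 31986769815;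
      505029364]);
    (103073523359481541139498973169224443756544000,
     [0; 0; 35507561089; 232465233; 28614185886; 332093190; 22327766175; 387442055; 17815749196]);
    (317011589442306258545519768935372337827020800,
     [0; 0; 0; 10617399936; 99627957; 11544493675; 166046595; 10778609205; 202661998]);
    (599812096280358766486113150389459409685708800,
     [0; 0; 0; 0; 3446888159; 55348865; 4314860745; 105666015; 4342373322]);
    (4554297761774942611787197640458315653500108800,
     [0; 0; 0; 0; 0; 690536990; 15095145; 1088213175; 28177604]);
    (118104221818259654586660148597301322053792563200,
     [0; 0; 0; 0; 0; 0; 49432245; 2709385; 92273524]);
    (126409292700971400301647438685253919947446228356819811565568000, [0; 0; 0; 0; 0; 0; 0; 1; 0])];
  cert_multiplier :=
    [1667451694791500572944521578418424851585552473946626622556241920000;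
     1641059613519080494233782078918291504773498778569187138185297920000;
     -573411952445446910122000192472897181736553288233835197099376640000;
     1641059613519080494233782078918291504773498778569187138185297920000;
     -1021584681892836406735304546651161588400974440669927561030500352000;
     1641059613519080494233782078918291504773498778569187138185297920000;
     -1213658708798860476712434984156132048400012077428252859858124800000;
     1641059613519080494233782078918291504773498778569187138185297920000;
     -1319579045486464423108049487680023857554424702431911688499855360000] |}.

Definition certificate9 : certificate := {|
  cert_den := 1400256;
  cert_scale := 26403643932992733924908995245526228099545335;
  cert_map := [
    [4115683; -85085; -85085; -85085; -85085; -85085; -85085; -85085; -85085; -83741];
    [680680; 4881448; 680680; 680680; 680680; 680680; 680680; 680680; 680680; 561064];
    [3743740; 3743740; 7944508; 3743740; 3743740; 3743740; 3743740; 3743740; 3743740; 3684604];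
    [-7487480; -7487480; -7487480; -3286712; -7487480; -7487480; -7487480; -7487480; -7487480;
     -5772536];
    [-24334310; -24334310; -24334310; -24334310; -20133542; -24334310; -24334310; -24334310;
     -24334310; -23949926];
    [19467448; 19467448; 19467448; 19467448; 19467448; 23668216; 19467448; 19467448; 19467448;
     12932920];
    [48668620; 48668620; 48668620; 48668620; 48668620; 48668620; 52869388; 48668620; 48668620;
     47899852];
    [-13905320; -13905320; -13905320; -13905320; -13905320; -13905320; -13905320; -9704552;
     -13905320; -4789928];
    [-29548805; -29548805; -29548805; -29548805; -29548805; -29548805; -29548805; -29548805;
     -25348037; -29082053]];
  cert_squares := [
    (1228870521339650389666480100296781868292869958656,
     [0; 25896555685; -17372144790; 25896555685; -20846573748; 25896555685; -22335614730;
      25896555685; -23162859720; 25895945509]);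
    (1236374162897373701352882064555838942966784,
     [0; 14461232851065; 69183804690; 8290972114425; 83020565628; 5646574655865; 88950606030;
      4177464956665; 92245072920; 3252732921081]);
    (82648504624993932388008269000305206702489600,
     [0; 0; 923035569456; 6918380469; 777100218180; 9883400670; 635855909260; 11530634115;
      529563408920; 12396736044]);
    (143160471989861476807762765043746602937761792,
     [0; 0; 0; 333946725255; 3953360268; 351483679690; 6588933780; 316828376865; 8385915720;
      276837791076]);
    (3794068639502001908981968282587989653565472768,
     [0; 0; 0; 0; 34117840328; 549077815; 45619069730; 1048239465; 48153335720; 1405874106]);
    (177828284691203079995585415473097756967737753600,
     [0; 0; 0; 0; 0; 2199057185; 59899398; 3287234223; 129014088; 3701422998]);
    (1360594573492062097774256655360826211023296921600,
     [0; 0; 0; 0; 0; 0; 442231336; 16126761; 806761928; 34150788]);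
    (900451078261060422231309051318772694257709875200,
     [0; 0; 0; 0; 0; 0; 0; 192683491; 18430584; 408035628]);
    (15236126810188723268881752174471800608674958186406897120182272000,
     [0; 0; 0; 0; 0; 0; 0; 0; 1; 0])];
  cert_multiplier :=
    [822275453223561803653544783570708061762201092120665319033421815808000;
     812009201232506659092042258025159549848071607232461744290511249408000;
     -280935985735224030925516611553935028530153353965690822839747649536000;
     812009201232506659092042258025159549848071607232461744290511249408000;
     -501578273526981197841328890578863646588624243182962051214381542604800;
     812009201232506659092042258025159549848071607232461744290511249408000;
     -596139254009162840805248438732404482899397481418935434803510353920000;
     812009201232506659092042258025159549848071607232461744290511249408000;
     -648673132054819309118537076595482725294271502661142870130804137984000;
     812171366628005020898361343578820209188878917894620122435360186368000] |}.

Definition certificate10 : certificate := {|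
  cert_den := 5374720;
  cert_scale := 4844065189688447048467345302147301742264621;
  cert_map := [
    [15859623; -264537; -264537; -264537; -264537; -264537; -264537; -264537; -264537; -264537;
     -240345];
    [-2909907; 13214253; -2909907; -2909907; -2909907; -2909907; -2909907; -2909907; -2909907;
     -2909907; -2885715];
    [11639628; 11639628; 27763788; 11639628; 11639628; 11639628; 11639628; 11639628; 11639628;
     11639628; 10333260];
    [50438388; 50438388; 50438388; 66562548; 50438388; 50438388; 50438388; 50438388; 50438388;
     50438388; 50019060];
    [-75657582; -75657582; -75657582; -75657582; -59533422; -75657582; -75657582; -75657582;
     -75657582; -75657582; -64545390];
    [-226972746; -226972746; -226972746; -226972746; -226972746; -210848586; -226972746; -226972746;
     -226972746; -226972746; -225085770];
    [151315164; 151315164; 151315164; 151315164; 151315164; 151315164; 167439324; 151315164;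
     151315164; 151315164; 118607580];
    [367479684; 367479684; 367479684; 367479684; 367479684; 367479684; 367479684; 383603844;
     367479684; 367479684; 364424580];
    [-91869921; -91869921; -91869921; -91869921; -91869921; -91869921; -91869921; -91869921;
     -75745761; -91869921; -52917345];
    [-193947611; -193947611; -193947611; -193947611; -193947611; -193947611; -193947611; -193947611;
     -193947611; -177823451; -192335195]];
  cert_squares := [
    (131426755475312005768618402823372108484197815523737600,
     [0; 129623130; -87738105; 129623130; -105285726; 129623130; -112806135; 129623130; -116984140;
      129623130; -119630085]);
    (1469203923734461421334427404614777009115234304,
     [0; 704285673000; 3597262305; 416101093317; 4316714766; 292593416310; 4625051535; 223978040195;
      4796349740; 180313709940; 4875451245]);
    (204585302077614247179069224475804718819180544,
     [0; 0; 940709885115; 7913977071; 774696780858; 11305681530; 619225669205; 13189961785;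
      503041795620; 14389049220; 416739943935]);
    (5318427709494512865306331044007720179403325440,
     [0; 0; 0; 95363610771; 1130568153; 104236794805; 1884280255; 97854293810; 2398174870;
      88809072870; 2739710610]);
    (975741333507086465656939076555988336535142400,
     [0; 0; 0; 0; 104642518981; 1884280255; 135873446475; 3597262305; 138979668030; 4980824730;
      132179887770]);
    (57357253804246160048459041027084811867704524800,
     [0; 0; 0; 0; 0; 7210186880; 171298205; 11436556285; 368949980; 13471065132; 539717850]);
    (1918278067786624221286208217825181925144336033382400,
     [0; 0; 0; 0; 0; 0; 17195755; 693515; 29851524; 1664436; 37161270]);
    (18444446192170860888225261017672397239229612032000,
     [0; 0; 0; 0; 0; 0; 0; 98330567; 5270714; 203705802; 12483270]);
    (2215137651272446929838955682192641935927146866278400,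
     [0; 0; 0; 0; 0; 0; 0; 0; 3046897; 465063; 7216335]);
    (9880230553340592856988824974978902727163605089267988873137356800,
     [0; 0; 0; 0; 0; 0; 0; 0; 0; 1; 0])];
  cert_multiplier :=
    [2225230732078628354345089670999847253197328791151461208828748759040000;
     2202753653976824027533523108666515462760992136695385843083003822080000;
     -756728296094079002656074265222170278023334033354537313440079544320000;
     2202753653976824027533523108666515462760992136695385843083003822080000;
     -1353120101728620474056307052466573784267466598255737017893845204992000;
     2202753653976824027533523108666515462760992136695385843083003822080000;
     -1608716589857709676084978246999889572657809126070536891231173345280000;
     2202753653976824027533523108666515462760992136695385843083003822080000;
     -1750714638818314788323128910629509455096888308189870154196355645440000;
     2202753653976824027533523108666515462760992136695385843083003822080000;
     -1840890166651954252319325427032320033308243850087777224232278425600000] |}.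

Definition certificate11 : certificate := {|
  cert_den := 41385344;
  cert_scale := 2359993565131570803289098993947954998813973407712287507940267667;
  cert_map := [
    [126007791; 1851759; 1851759; 1851759; 1851759; 1851759; 1851759; 1851759; 1851759; 1851759;
     1851759; 1843695];
    [-18517590; 105638442; -18517590; -18517590; -18517590; -18517590; -18517590; -18517590;
     -18517590; -18517590; -18517590; -17461206];
    [-120364335; -120364335; 3791697; -120364335; -120364335; -120364335; -120364335; -120364335;
     -120364335; -120364335; -120364335; -119840175];
    [320971560; 320971560; 320971560; 445127592; 320971560; 320971560; 320971560; 320971560;
     320971560; 320971560; 320971560; 298432680];
    [1203643350; 1203643350; 1203643350; 1203643350; 1327799382; 1203643350; 1203643350; 1203643350;
     1203643350; 1203643350; 1203643350; 1198401750];
    [-1444372020; -1444372020; -1444372020; -1444372020; -1444372020; -1320215988; -1444372020;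
     -1444372020; -1444372020; -1444372020; -1444372020; -1311235380];
    [-4092387390; -4092387390; -4092387390; -4092387390; -4092387390; -4092387390; -3968231358;
     -4092387390; -4092387390; -4092387390; -4092387390; -4074565950];
    [2338507080; 2338507080; 2338507080; 2338507080; 2338507080; 2338507080; 2338507080; 2462663112;
     2338507080; 2338507080; 2338507080; 2020267080];
    [5553954315; 5553954315; 5553954315; 5553954315; 5553954315; 5553954315; 5553954315; 5553954315;
     5678110347; 5553954315; 5553954315; 5529768075];
    [-1234212070; -1234212070; -1234212070; -1234212070; -1234212070; -1234212070; -1234212070;
     -1234212070; -1234212070; -1110056038; -1234212070; -903666790];
    [-2591845347; -2591845347; -2591845347; -2591845347; -2591845347; -2591845347; -2591845347;
     -2591845347; -2591845347; -2591845347; -2467689315; -2580558435]];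
  cert_squares := [
    (121206971175327722270758934142574140489144128346889607220125173137408,
     [0; 729483263145; -488350292430; 729483263145; -586020350916; 729483263145; -627878947410;
      729483263145; -651133723240; 729483263145; -665932216950; 729477806505]);
    (80006387009121395866445906865053157916184658867790897348755456,
     [0; 506967232386615; 2742868638510; 294603957711063; 3291442366212; 203591125707255;
      3526545392370; 153028441260695; 3657158184680; 120852187521975; 3740275416150; 98645824581975]);
    (578179411697051194755734527889415709193637837877127430556385280,
     [0; 0; 97953553265568; 822860591553; 82780796555028; 1175515130790; 68001170497260;
      1371434319255; 56864049340280; 1496110166460; 48487617549000; 1576451922045]);
    (941915648855917910344258383726313441163272218147467695317549056,
     [0; 0; 0; 37343218560219; 470206052316; 40020441036290; 783676753860; 36796216232685;
      997406777640; 32668709894100; 1150853974200; 28791029193135]);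
    (23266131439695719366475339851780172706954684252566234844593389568,
     [0; 0; 0; 0; 3884661549912; 65306396155; 5217088490250; 124675847205; 5532058248360;
      172628096130; 5445713507220; 209496822150]);
    (13640610462109889648656313907189431916992793769019772261523712376832,
     [0; 0; 0; 0; 0; 74703457595; 1874824770; 115320248085; 4038084120; 131958816066; 6057126180;
      135795894630]);
    (247013326756379079410754840508482864178143597854633453076250361856,
     [0; 0; 0; 0; 0; 0; 294662783640; 9590449785; 540593831176; 23017079484; 702993264120;
      36486974370]);
    (477559669667257898523014032198261598821111068542578870654347509760,
     [0; 0; 0; 0; 0; 0; 0; 91226210747; 5114906552; 180116750772; 13539458520; 245383598790]);
    (148225909886742183265257171172505020518482460313197172553375928922669056,
     [0; 0; 0; 0; 0; 0; 0; 0; 92623328; 6907887; 214664310; 18092085]);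
    (956266147711693674322371232808902364137404921661892969814663134038720512,
     [0; 0; 0; 0; 0; 0; 0; 0; 0; 11554683; 2827790; 30262265]);
    (65563513809820513445212232016420787488687521853387702143750288380463206936211147980800,
     [0; 0; 0; 0; 0; 0; 0; 0; 0; 0; 1; 0])];
  cert_multiplier :=
    [64333598806046359613435450689289686269574336828830325461565373660544587327148158088845721600;
     63797015972683447401804978603804139030160063199164114815069978742820373745871639817951641600;
     -21802254824257394678898798286753593582800961362720915584852054498664338163233731543544627200;
     63797015972683447401804978603804139030160063199164114815069978742820373745871639817951641600;
     -39029425550318145537365648081962249553276021001031163794135540130506123261310109470022696960;
     63797015972683447401804978603804139030160063199164114815069978742820373745871639817951641600;
     -46412498718629895905280012279908816397765332274592698740971319687009745446199985724227584000;
     63797015972683447401804978603804139030160063199164114815069978742820373745871639817951641600;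
     -50514206034358646109676881278768020200259394093237995933657863885067313326694361421008076800;
     63797015972683447401804978603804139030160063199164114815069978742820373745871639817951641600;
     -53124383417095123512474888823496604438210160705103185056276573829285765614281691409868390400;
     63799352671988399355096194213879400148339392530113567914881206264661243998598595022887321600] |}.

Definition certificate12 : certificate := {|
  cert_den := 319506432;
  cert_scale := 10055728004817972356548485623317090642666944404322266759088906357676315;
  cert_map := [
    [970531989; 12012693; 12012693; 12012693; 12012693; 12012693; 12012693; 12012693; 12012693;
     12012693; 12012693; 12012693; 11657877];
    [156165009; 1114684305; 156165009; 156165009; 156165009; 156165009; 156165009; 156165009;
     156165009; 156165009; 156165009; 156165009; 155810193];
    [-780825045; -780825045; 177694251; -780825045; -780825045; -780825045; -780825045; -780825045;
     -780825045; -780825045; -780825045; -780825045; -753504213];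
    [-3904125225; -3904125225; -3904125225; -2945605929; -3904125225; -3904125225; -3904125225;
     -3904125225; -3904125225; -3904125225; -3904125225; -3904125225; -3895254825];
    [7808250450; 7808250450; 7808250450; 7808250450; 8766769746; 7808250450; 7808250450; 7808250450;
     7808250450; 7808250450; 7808250450; 7808250450; 7471175250];
    [26548051530; 26548051530; 26548051530; 26548051530; 26548051530; 27506570826; 26548051530;
     26548051530; 26548051530; 26548051530; 26548051530; 26548051530; 26487732810];
    [-26548051530; -26548051530; -26548051530; -26548051530; -26548051530; -26548051530;
     -25589532234; -26548051530; -26548051530; -26548051530; -26548051530; -26548051530;
     -25040083530];
    [-72058997010; -72058997010; -72058997010; -72058997010; -72058997010; -72058997010;
     -72058997010; -71100477714; -72058997010; -72058997010; -72058997010; -72058997010;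
     -71895274770];
    [36029498505; 36029498505; 36029498505; 36029498505; 36029498505; 36029498505; 36029498505;
     36029498505; 36988017801; 36029498505; 36029498505; 36029498505; 33000637065];
    [84068829845; 84068829845; 84068829845; 84068829845; 84068829845; 84068829845; 84068829845;
     84068829845; 84068829845; 85027349141; 84068829845; 84068829845; 83877820565];
    [-16813765969; -16813765969; -16813765969; -16813765969; -16813765969; -16813765969;
     -16813765969; -16813765969; -16813765969; -16813765969; -15855246673; -16813765969;
     -14025030481];
    [-35156056117; -35156056117; -35156056117; -35156056117; -35156056117; -35156056117;
     -35156056117; -35156056117; -35156056117; -35156056117; -35156056117; -34197536821;
     -35076179509]];
  cert_squares := [
    (1583790664170022242720483324030178285737533532289183170683829569111180212961280,
     [0; 101378548425; -68300740200; 101378548425; -81960888240; 101378548425; -87815237400;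
      101378548425; -91067653600; 101378548425; -93137373000; 101378548425; -94568226192]);
    (137599205865109259671464827160302306988568593390315086548554011230863360,
     [0; 197525963751270; 1063784028615; 117041396010693; 1276540834338; 82548009836160;
      1367722322505; 63385017516975; 1418378704820; 51190386041130; 1450614584475; 42747948865545;
      1470514752630]);
    (1480567518351974726751826082871773813185229172177699799523890141593600,
     [0; 0; 958971550646109; 8297515423197; 798605285401638; 11853593461710; 646029129969795;
      13829192371995; 531621453099100; 15086391678540; 445756999966425; 15956760429225;
      379837007781858]);
    (37149471841870980464049116096730820699761730536983419438545099722588160,
     [0; 0; 0; 98245880305716; 1185359346171; 107733177625645; 1975598910285; 101472253930775;
      2514398613090; 92407654943310; 2901229168950; 83552896121310; 3183496903125]);
    (159212677767273029697029153885469831491682237952337784033916786531368960,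
     [0; 0; 0; 0; 22832561950055; 395119782057; 30115208881953; 754319583927; 31333191091818;
      1044442500822; 30234618772302; 1276540834338; 28301412091689]);
    (8671453645934251481849179352507974095144953828466833142769708841765437440,
     [0; 0; 0; 0; 0; 1603420994578; 35919980187; 2553041054333; 77366111172; 3019128602448;
      116049166758; 3207910523202; 149395756356]);
    (563198429544593740722965010167928036489219052099220114312193192713256960,
     [0; 0; 0; 0; 0; 0; 2905358615745; 96707638965; 5195073282476; 232098333516; 6573719755890;
      375453186570; 7279243086060]);
    (2919145423228730298498309714466790988340675851660561912090758426943238963200,
     [0; 0; 0; 0; 0; 0; 0; 21526522986; 921025133; 44827517247; 2438007705; 63784739535; 4164298875]);
    (9675084930042192167293206497552660504814904261655033157107175011623328808960,
     [0; 0; 0; 0; 0; 0; 0; 0; 5009133913; 379245643; 11064088245; 1097816335; 16348369455]);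
    (228382452333335604333193045979701317012699620624806146695773128674934874177536,
     [0; 0; 0; 0; 0; 0; 0; 0; 0; 589026550; 59880891; 1508834569; 171832122]);
    (6433573990167810970333792946059172425074174779106105622983048856033444761698304,
     [0; 0; 0; 0; 0; 0; 0; 0; 0; 0; 31031761; 13442649; 89047662]);
    (3332375327767034615704500698190889658279914796970587848905404908406215075221827316061569024000,
     [0; 0; 0; 0; 0; 0; 0; 0; 0; 0; 0; 1; 0])];
  cert_multiplier :=
    [16349173436888224496990200222230382243145730344512479048003064106446599960838013303067136657195008000;
     16234667389564452088410635855916960319604998236762706817662658838856975363829762754649521188241408000;
     -5526061843845256438049776318285742030075731520004007836227958213875283051618171466634122531700736000;
     16234667389564452088410635855916960319604998236762706817662658838856975363829762754649521188241408000;
     -9901108899991952625057771626388966884720023892907305213074162677939659654109408420574374369479884800;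
     16234667389564452088410635855916960319604998236762706817662658838856975363829762754649521188241408000;
     -11776129066911965276632626758433206108139006338437289803151107448252963912319938543691625157099520000;
     16234667389564452088410635855916960319604998236762706817662658838856975363829762754649521188241408000;
     -12817806937423083416396435165124450121149552141509503464304965653982577389103566389867875594665984000;
     16234667389564452088410635855916960319604998236762706817662658838856975363829762754649521188241408000;
     -13480692855021067687155222333018878129428990379828184885039239057628695056147693201070944054935552000;
     16234667389564452088410635855916960319604998236762706817662658838856975363829762754649521188241408000;
     -13939353710484942507795517746392171743194530645771531140441955344406919167438102284311066392395776000] |}.

Definition certificate13 : certificate := {|
  cert_den := 1236185600;
  cert_scale := 514227758062168804283204582347906794657589504542143927556309184748652971001;
  cert_map := [
    [3665654325; -42902475; -42902475; -42902475; -42902475; -42902475; -42902475; -42902475;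
     -42902475; -42902475; -42902475; -42902475; -42902475; -42851787];
    [514829700; 4223386500; 514829700; 514829700; 514829700; 514829700; 514829700; 514829700;
     514829700; 514829700; 514829700; 514829700; 514829700; 505655172];
    [3861222750; 3861222750; 7569779550; 3861222750; 3861222750; 3861222750; 3861222750; 3861222750;
     3861222750; 3861222750; 3861222750; 3861222750; 3861222750; 3856660830];
    [-12870742500; -12870742500; -12870742500; -9162185700; -12870742500; -12870742500;
     -12870742500; -12870742500; -12870742500; -12870742500; -12870742500; -12870742500;
     -12870742500; -12598547940];
    [-54700655625; -54700655625; -54700655625; -54700655625; -50992098825; -54700655625;
     -54700655625; -54700655625; -54700655625; -54700655625; -54700655625; -54700655625;
     -54700655625; -54636028425];
    [87521049000; 87521049000; 87521049000; 87521049000; 87521049000; 91229605800; 87521049000;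
     87521049000; 87521049000; 87521049000; 87521049000; 87521049000; 87521049000; 85233246120];
    [277149988500; 277149988500; 277149988500; 277149988500; 277149988500; 277149988500;
     280858545300; 277149988500; 277149988500; 277149988500; 277149988500; 277149988500;
     277149988500; 276822544020];
    [-237557133000; -237557133000; -237557133000; -237557133000; -237557133000; -237557133000;
     -237557133000; -233848576200; -237557133000; -237557133000; -237557133000; -237557133000;
     -237557133000; -229371021000];
    [-623587474125; -623587474125; -623587474125; -623587474125; -623587474125; -623587474125;
     -623587474125; -623587474125; -619878917325; -623587474125; -623587474125; -623587474125;
     -623587474125; -622850724045];
    [277149988500; 277149988500; 277149988500; 277149988500; 277149988500; 277149988500;
     277149988500; 277149988500; 277149988500; 280858545300; 277149988500; 277149988500;
     277149988500; 262988014740];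
    [637444973550; 637444973550; 637444973550; 637444973550; 637444973550; 637444973550;
     637444973550; 637444973550; 637444973550; 637444973550; 641153530350; 637444973550;
     637444973550; 636691851246];
    [-115899086100; -115899086100; -115899086100; -115899086100; -115899086100; -115899086100;
     -115899086100; -115899086100; -115899086100; -115899086100; -115899086100; -112190529300;
     -115899086100; -104191457556];
    [-241456429375; -241456429375; -241456429375; -241456429375; -241456429375; -241456429375;
     -241456429375; -241456429375; -241456429375; -241456429375; -241456429375; -241456429375;
     -237747872575; -241171155775]];
  cert_squares := [
    (39620661961807667051256312577061157372168099396241140042683626189468760668884172800,
     [0; 562915913175; -376396470450; 562915913175; -451675764540; 562915913175; -483938319150;
      562915913175; -501861960600; 562915913175; -513267914250; 562915913175; -521164343700;
      562914752983]);
    (431754698763058834619967959670859152937624772300874279519003001867468800,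
     [0; 96750826066719825; 525864473984850; 56663127261725985; 631037368781820; 39482684916728625;
      676111466551950; 29937994725063425; 701152631979800; 23864100966731025; 717087919070250;
      19659097595577825; 728120040902100; 16578160347621873]);
    (14606716598344683248634313666862416413592845600140462404016714010887192576000,
     [0; 0; 272535720617160; 2286367278195; 230892975481740; 3266238968850; 190153253933500;
      3810612130325; 159426650273800; 4157031414900; 136307722236000; 4396860150375;
      118492065157620; 4568232431334]);
    (43421089555520423505052412146532664114642320979193897914150282656166707200,
     [0; 0; 0; 2460995883366735; 30049398513420; 2662875537572250; 50082330855700; 2473524331794425;
      63741148361800; 2220196544472900; 73547478879000; 1977378204630675; 80902226766900;
      1761937387482558]);
    (60501398732814141259993904641628211217603193160418004657070602767679304499200,
     [0; 0; 0; 0; 33786119098160; 544373161475; 45502135768050; 1039257853725; 48388621020600;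
      1438972412850; 47774941983300; 1758744060150; 45774166977000; 2014006298733]);
    (821624348967770691922247273996173884841815011324191290636300653720987972403200,
     [0; 0; 0; 0; 0; 4377263191275; 98976938450; 6853078847125; 213181098200; 7962232893090;
      319771647300; 8304753222150; 413822131800; 8238512070789]);
    (4948751164516521494383642151253671091343938619811001735349996494430147497164800,
     [0; 0; 0; 0; 0; 0; 927172662800; 26647637275; 1706896458680; 63954329460; 2227593459000;
      103455532950; 2542805449800; 141007963668]);
    (83599173865734390159240186345354498751896446454538794690287518101723414528000,
     [0; 0; 0; 0; 0; 0; 0; 3266463658955; 140090435960; 6635279111220; 370827624600; 9195625221750;
      644069032200; 10900920217044]);
    (386666766180594446108420472301644694389800354664572953086650816578967928688135372800,
     [0; 0; 0; 0; 0; 0; 0; 0; 814409160; 44785945; 1897147250; 129643525; 2931391100; 237416751]);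
    (31554226305713690978767428470205972255268906872465200580317272720496342650060800,
     [0; 0; 0; 0; 0; 0; 0; 0; 0; 37402926715; 3795019550; 91148733775; 11927204300; 144854870589]);
    (32069162239767586185994972682859884845916836167553870576832880220232196764467200,
     [0; 0; 0; 0; 0; 0; 0; 0; 0; 0; 21442849400; 2981801075; 60090442500; 9303219354]);
    (344249851215085229675640298970223830611425753403981236856338511229666732995824844800,
     [0; 0; 0; 0; 0; 0; 0; 0; 0; 0; 0; 43020825; 47143100; 134224974]);
    (50061362225410806296013530365756606844788656473632337209113383483956936002019077528055468523520000,
     [0; 0; 0; 0; 0; 0; 0; 0; 0; 0; 0; 0; 1; 0])];
  cert_multiplier :=
    [12521918394481592488996125590197171091233382443718036550571400020512086254706099718875801829867061248000000;
     12447229787553784833459481138255999213918459641274220162449534284205312903152575519067410777826459648000000;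
     -4223765202779069266689804831359838281954409349535223108938377164375210985937716039497527977982754816000000;
     12447229787553784833459481138255999213918459641274220162449534284205312903152575519067410777826459648000000;
     -7572901922231201617826990915671240156591967708185875040840332601352670434066479191172193939552718028800000;
     12447229787553784833459481138255999213918459641274220162449534284205312903152575519067410777826459648000000;
     -9008246230567829768314356380376126674293778433321868725941170645771581626121663399032765065939845120000000;
     12447229787553784833459481138255999213918459641274220162449534284205312903152575519067410777826459648000000;
     -9805659735199289851918448305212174739683673280619642995441636226004310066152321292288637913932693504000000;
     12447229787553784833459481138255999213918459641274220162449534284205312903152575519067410777826459648000000;
     -10313104692692037177848324984653296235840879092536408439669205231606955437080921769815102453564506112000000;
     12447229787553784833459481138255999213918459641274220162449534284205312903152575519067410777826459648000000;
     -10664412740187016095799778070420226502411252346940322977980599158562633001569952869641116365617299456000000;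
     12447318029924602757470714556234332494693457792476692098277971248050450455884522686093086749332668416000000] |}.

Close Scope Z_scope.

Definition certificates : list certificate :=
  [certificate1; certificate2; certificate3; certificate4; certificate5; certificate6;
   certificate7; certificate8; certificate9; certificate10; certificate11; certificate12;
   certificate13].

Lemma certificates_valid :
  forallb (fun p => cert_check p (nth (p - 1) certificates certificate1)) (seq 1 13) = true.
Proof. vm_compute. reflexivity. Qed.

Theorem lemma8 (p : nat) (hp1 : (1 <= p)%nat) (hp2 : (p <= 13)%nat) :
  exists c C : R, 0 < c /\ 0 < C /\
    forall eta : R -> R, is_poly_deg p eta -> eta (-1) = 0 ->
      exists psi : R -> R, is_poly_deg (p - 1) psi /\ psi 1 = eta 1 /\
        J psi eta >= c * sqnorm eta /\ sqnorm psi <= C * sqnorm eta.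
Proof.
  apply lemma8_of_gram_bound, (cert_check_sound p (nth (p - 1) certificates certificate1)).
  pose proof certificates_valid as Hvalid. rewrite forallb_forall in Hvalid.
  apply Hvalid, in_seq. lia.
Qed.
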